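(* Let $G=(V,E)$ be a finite simple undirected graph, $\Gamma$ a subgroup of $\mathrm{Aut}(G)$, and $(G,\mathcal{C})$ the colored graph whose coloring is given by the $\Gamma$-orbits. Fix any ordering $(V_{\eta_1},\dots,V_{\eta_r})$ of the vertex color classes and let $m$ be the $2$-path function with respect to this ordering. (i) For every $\{v,w\}\in\tilde E$ and $\sigma\in\Gamma$, $m_{v\to w}=m_{\sigma(v)\to\sigma(w)}$. (ii) If $\Gamma$ is generously transitive or cyclic, then for all $v,w\in V$ with $c(v)=c(w)$ one has $m_{v\to w}(k,h)=m_{w\to v}(k,h)$ for all $k,h\in F$.
   Context: $\mathrm{Aut}(G)$ is the group of permutations $\sigma$ of $V$ with $\sigma(v)\sim\sigma(w)\iff v\sim w$. The extended edge set is $\tilde E=E\cup\{\{v\}:v\in V\}$, on which $\Gamma$ acts by $\sigma\cdot\{v,w\}=\{\sigma(v),\sigma(w)\}$. The orbit coloring: the vertex color classes $V_1,\dots,V_r$ are the $\Gamma$-orbits on $V$ (equivalently, loop orbits), and the edge color classes are the $\Gamma$-orbits on $E$; $c(v,w)$ denotes the color (orbit label) of $\{v,w\}\in\tilde E$, with loop $\{v\}$ colored by the index $i$ of the orbit $V_i\ni v$, and $c(v)=c(v,v)$. For the ordering, $\pi(v)=i$ iff $v\in V_{\eta_i}$ and $V_{\le i}=V_{\eta_1}\cup\dots\cup V_{\eta_i}$; $m_{v\to w}(k,h)=|\{u\in V_{\le\min(\pi(v),\pi(w))}: c(v,u)=k,\ c(u,w)=h\}|$ for $\{v,w\}\in\tilde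 E$. $F_i=\{c(v,w):\{v,w\}\in\tilde E,\ c(v)=c(w)=i\}$ and $F=\bigcup_iF_i$. $\Gamma$ is generously transitive if for every orbit $V_i$ and distinct $a,b\in V_i$ there is $\sigma\in\Gamma$ with $\sigma(a)=b$ and $\sigma(b)=a$. *)

From mathcomp Require Import all_boot all_order all_fingroup all_solvable.
Set Implicit Arguments. Unset Strict Implicit. Unset Printing Implicit Defensive.
Local Open Scope group_scope.

Section Defs.
Variables (T : finType) (e : rel T).

Definition aut_graph : {set {perm T}} :=
  [set s : {perm T} | [forall x, forall y, e (s x) (s y) == e x y]].

(* {v,w} belongs to the extended edge set E~ = E u {{v} : v in V}. *)
Definition ext_edge (v w : T) : bool := (v == w) || e v w.

Variable Gam : {group {perm T}}.

Definition vorb (v : T) : {set T} := [set (s : {perm T}) v | s in Gam].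

Definition vorbits : {set {set T}} := [set vorb v | v in T].

(* Orbit colouring of extended edges: the colour of {v,w} in E~ is its
   Gamma-orbit (as a set of unordered pairs/singletons, each represented by
   a {set T}); loops {v} get the orbit of {v}, which is in bijection with the
   vertex orbit V_i containing v. *)
Definition col (v w : T) : option {set {set T}} :=
  if ext_edge v w then
    Some [set (fun x => (s : {perm T}) x) @: [set v; w] | s in Gam]
  else None.

Variable eta : seq {set T}.

(* pi(v): position (0-based) of the class of v in the ordering. *)
Definition pi_pos (v : T) : nat := index (vorb v) eta.

Definition m2 (v w : T) (k h : {set {set T}}) : nat :=
  #|[set u : T | (pi_pos u <= minn (pi_pos v) (pi_pos w))%N
                 & (col v u == Some k) && (col u w == Some h)]|.

Definition Fcol : {set {set {set T}}} :=
  [set k | [exists v, exists w,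
     [&& ext_edge v w, vorb v == vorb w & col v w == Some k]]].

Definition gen_transitive : Prop :=
  forall a b : T, vorb a = vorb b -> a != b ->
    exists2 s : {perm T}, s \in Gam & s a = b /\ s b = a.

End Defs.

(* Everything in m is built from Gamma-invariant data, so (i) is the change of
   variables u |-> s u, and for generously transitive Gamma, (ii) is (i) applied
   to an element swapping v and w.  For abelian (e.g. cyclic) Gamma write
   w = g v.  A colour of F only joins vertices of one orbit, so m_{v->w}(k,h)
   counts midpoints u = x v in the orbit of v.  Lifting along the orbit map
   x |-> x v multiplies both counts by the same stabiliser order, and on Gamma
   the inversion x |-> x^-1 exchanges the midpoints x v of v->w with the
   midpoints x^-1 w of w->v, since commutativity gives
   c(w, x^-1 w) = c(v, x v). *)

From mathcomp Require Import all_boot all_order all_fingroup all_solvable.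

Set Implicit Arguments. Unset Strict Implicit. Unset Printing Implicit Defensive.

Section OrbitFibres.
Variables (aT : finGroupType) (D : {group aT}) (rT : finType).
Variables (to : action D rT) (G : {group aT}) (x : rT).
Hypothesis sGD : G \subset D.

Lemma card_act_preim (S : {set rT}) :
  #|[set a in G | to x a \in S]| = #|orbit to G x :&: S| * #|'C_G[x | to]%g|.
Proof.
rewrite -sum1_card (partition_big (to x) (mem (orbit to G x :&: S))); last first.
  by move=> a; rewrite !inE => /andP[Ga ->]; rewrite mem_orbit ?(subsetP sGD).
rewrite -sum_nat_const; apply: eq_bigr => _ /setIP[/orbitP[a Ga <-] Sxa].
rewrite sum1_card -(card_rcoset _ a) -amove_act //; apply: eq_card => b.
by rewrite unfold_in !inE; case: eqP => [->|]; rewrite ?Sxa ?andbF ?andbT.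
Qed.

End OrbitFibres.

Lemma card_astab1_orbit (aT : finGroupType) (rT : finType)
    (to : {action aT &-> rT}) (G : {group aT}) x y :
  y \in orbit to G x -> #|'C_G[x | to]%g| = #|'C_G[y | to]%g|.
Proof.
move=> /orbit_eqP oyx; have orb_gt0 : 0 < #|orbit to G x|.
  by apply/card_gt0P; exists x; exact: orbit_refl.
apply/eqP; rewrite -(eqn_pmul2l orb_gt0).
by rewrite card_orbit_stab -oyx card_orbit_stab.
Qed.

Section OrbitColouring.
Variables (T : finType) (e : rel T) (Gam : {group {perm T}}).
Hypothesis Gam_aut : Gam \subset aut_graph e.

Lemma vorbE v : vorb Gam v = orbit 'P Gam v.
Proof. by []. Qed.

Lemma vorb_eq u v : u \in vorb Gam v -> vorb Gam u = vorb Gam v.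
Proof. exact/(orbit_eqP (to := 'P)). Qed.

Lemma vorb_act s v : s \in Gam -> vorb Gam (s v) = vorb Gam v.
Proof. exact: (orbit_act 'P v). Qed.

Lemma colE v w :
  col e Gam v w =
  if ext_edge e v w then Some (orbit 'P^* Gam [set v; w]) else None.
Proof. by []. Qed.

Lemma ext_edge_act s v w : s \in Gam -> ext_edge e (s v) (s w) = ext_edge e v w.
Proof.
move/(subsetP Gam_aut); rewrite inE => /forallP/(_ v)/forallP/(_ w)/eqP e_s.
by rewrite /ext_edge (inj_eq perm_inj) e_s.
Qed.

Lemma col_act s v w : s \in Gam -> col e Gam (s v) (s w) = col e Gam v w.
Proof.
move=> sG; rewrite !colE ext_edge_act //.
have -> : [set s v; s w] = ('P^*)%act [set v; w] s.
  by rewrite /= /setact imsetU1 imset_set1.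
by rewrite orbit_act.
Qed.

Lemma Fcol_col_orbit k v u :
  k \in Fcol e Gam -> col e Gam v u = Some k -> u \in vorb Gam v.
Proof.
rewrite inE => /existsP[a /existsP[b /and3P[_ /eqP oab /eqP]]].
rewrite !colE; case: ifP => // _ [<-]; case: ifP => // _ [] orb_vu.
have : [set v; u] \in orbit 'P^* Gam [set a; b] by rewrite -orb_vu orbit_refl.
case/orbitP=> s sG /= ab_vu.
have ab_a : [set a; b] \subset vorb Gam a.
  by rewrite subUset !sub1set {2}oab !vorbE !orbit_refl.
have vu_a z : z \in [set v; u] -> z \in orbit 'P Gam a.
  rewrite -ab_vu => /imsetP[y /(subsetP ab_a) ay ->].
  by rewrite (orbit_actr 'P).
by rewrite vorbE (orbit_eqP (vu_a v _)) ?vu_a // !inE eqxx ?orbT.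
Qed.

Variable eta : seq {set T}.

Lemma pi_pos_act s v : s \in Gam -> pi_pos Gam eta (s v) = pi_pos Gam eta v.
Proof. by move=> sG; rewrite /pi_pos vorb_act. Qed.

Lemma m2_act s v w k h : s \in Gam ->
  m2 e Gam eta (s v) (s w) k h = m2 e Gam eta v w k h.
Proof.
move=> sG; rewrite /m2 -(card_preimset _ (@perm_inj _ s)).
by apply: eq_card => u; rewrite !inE !pi_pos_act // !col_act.
Qed.

Definition midpoints v w k h : {set T} :=
  [set u | (col e Gam v u == Some k) && (col e Gam u w == Some h)].

Lemma m2_in_orbit v w k h : vorb Gam v = vorb Gam w -> k \in Fcol e Gam ->
  m2 e Gam eta v w k h = #|vorb Gam v :&: midpoints v w k h|.
Proof.
move=> ovw kF; apply: eq_card => u; rewrite !inE.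
have [/(Fcol_col_orbit kF) vu|] := eqP; last by rewrite !andbF.
by rewrite vu /pi_pos -ovw (vorb_eq vu) minnn leqnn.
Qed.

Lemma m2_sym_gen_transitive v w k h : gen_transitive Gam ->
  vorb Gam v = vorb Gam w -> m2 e Gam eta v w k h = m2 e Gam eta w v k h.
Proof.
move=> Gam_gtr ovw; have [-> // | nvw] := eqVneq v w.
have [s sG [sv sw]] := Gam_gtr v w ovw nvw.
by rewrite -(m2_act v w k h sG) sv sw.
Qed.

Hypothesis e_sym : symmetric e.

Lemma col_sym v w : col e Gam v w = col e Gam w v.
Proof.
rewrite !colE /ext_edge eq_sym e_sym; case: ifP => // _.
by rewrite setUC.
Qed.

Lemma col_actV s v : s \in Gam -> col e Gam v (s^-1%g v) = col e Gam v (s v).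
Proof. by move=> sG; rewrite -(col_act v (s^-1%g v) sG) permKV col_sym. Qed.

Lemma midpoints_invg g v k h : abelian Gam -> g \in Gam ->
  [set a in Gam | a (g v) \in midpoints (g v) v k h] =
  [set a in Gam | a v \in midpoints v (g v) k h]^-1%g.
Proof.
move=> Gab gG; apply/setP => a; rewrite mem_invg !inE groupV.
apply: andb_id2l => aG.
have cag : commute a g by apply: (centsP Gab).
rewrite col_actV // -(col_act (a^-1%g v) (g v) aG) permKV -(col_act v (a v) gG).
by rewrite -!permM cag [col _ _ v _]col_sym.
Qed.

Lemma m2_sym_abelian v w k h : abelian Gam ->
  vorb Gam v = vorb Gam w -> k \in Fcol e Gam ->
  m2 e Gam eta v w k h = m2 e Gam eta w v k h.
Proof.
move=> Gab ovw kF; rewrite (m2_in_orbit h ovw kF) (m2_in_orbit h (esym ovw) kF).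
have w_orb : w \in vorb Gam v by rewrite ovw vorbE orbit_refl.
have /imsetP[g gG w_gv] := w_orb.
apply/eqP; rewrite -(eqn_pmul2r (cardG_gt0 'C_Gam[v | 'P]%G)).
rewrite {2}(card_astab1_orbit (to := 'P) (G := Gam) (x := v) w_orb).
rewrite !vorbE -!card_act_preim ?subsetT // w_gv midpoints_invg //.
by rewrite card_invg.
Qed.

End OrbitColouring.

Theorem lemma3p10 (T : finType) (e : rel T) (Gam : {group {perm T}})
    (eta : seq {set T}) :
  symmetric e -> irreflexive e ->
  Gam \subset aut_graph e ->
  perm_eq eta (enum (vorbits Gam)) ->
  (forall (v w : T) (s : {perm T}), ext_edge e v w -> s \in Gam ->
     forall k h, m2 e Gam eta v w k h = m2 e Gam eta (s v) (s w) k h)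
  /\
  (gen_transitive Gam \/ cyclic Gam ->
     forall v w : T, ext_edge e v w -> vorb Gam v = vorb Gam w ->
     forall k h, k \in Fcol e Gam -> h \in Fcol e Gam ->
       m2 e Gam eta v w k h = m2 e Gam eta w v k h).
Proof.
move=> e_sym _ Gam_aut _; split=> [v w s _ sG k h | Gam_sym v w _ ovw k h kF _].
  by rewrite m2_act.
case: Gam_sym => [Gam_gtr | /cyclic_abelian Gab].
  exact: m2_sym_gen_transitive.
exact: m2_sym_abelian.
Qed.
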